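(* For every integer $d\ge6$, the polynomial $x^d-x^{d-1}-1$ has at least two roots strictly outside the closed unit disk. Moreover, as $d\to\infty$, approximately $\frac d3$ of its roots lie outside the unit disk (the number of such roots is $(\tfrac13+o(1))d$). *)

From HB Require Import structures.
From mathcomp Require Import all_boot all_order all_algebra algC.
Set Implicit Arguments. Unset Strict Implicit. Unset Printing Implicit Defensive.
Import Order.TTheory GRing.Theory Num.Theory.
Local Open Scope ring_scope.

Definition pd (d : nat) : {poly algC} := ('X^d - 'X^(d.-1) - 1)%R.

(* The complete list of roots (with multiplicity) of p in the algebraically
   closed field algC: p = lead_coef p * prod_(z in rootsC p) (X - z). *)
Definition rootsC (p : {poly algC}) : seq algC :=
  sval (closed_field_poly_normal p).

Definition n_out (d : nat) : nat :=
  count (fun z : algC => 1 < `|z|) (rootsC (pd d)).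

From HB Require Import structures.
From mathcomp Require Import all_boot all_order all_algebra algC.
From mathcomp Require Import ring lra zify.
Import Order.TTheory GRing.Theory Num.Theory.
Set Implicit Arguments.
Unset Strict Implicit.
Unset Printing Implicit Defensive.
Local Open Scope ring_scope.

(* For p = \prod_(z <- s) (X - z) of degree n and its conjugate reciprocal
   p*, the Schur-Cohn Hermitian form of a sequence c supported in [0, n) is
   \sum_l (|\sum_t p_t c_(t+l)|^2 - |\sum_t p*_t c_(t+l)|^2).  Peeling off one
   root at a time diagonalises it as \sum_z (|z|^2 - 1) |L_z(c)|^2 for some
   linear forms L_z.  Hence if the form is positive (negative) definite on a
   subspace of codimension m, at least n - m roots lie outside (inside) the
   closed unit disk: otherwise some nonzero c of the subspace is killed by the
   forms L_z of all the other roots, and the form has the wrong sign at c.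
   For x^d - x^(d-1) - 1 the form is
   |c_0 + c_(d-1)|^2 - |c_0|^2 + \sum_l (|c_l|^2 - |c_l - c_(l+1)|^2); on
   sequences supported in [1, 3J] it splits into J blocks of three
   coordinates, each of the shape |u|^2 - |v|^2 - |w|^2.  Killing v and w
   (resp. u) in every block gives definite subspaces of dimension J (resp. 2J),
   so J <= n_out d <= d - 2J for J = (d - 2) / 3.  For d = 6, 7, where J = 1,
   a separate positive plane gives the two outer roots. *)

Lemma sum_nat_delta (R : pzSemiRingType) n k (g : nat -> R) :
  \sum_(0 <= t < n) (t == k)%:R * g t = if (k < n)%N then g k else 0.
Proof.
elim: n => [|n IH]; first by rewrite big_geq.
rewrite big_nat_recr //= IH ltnS.
by case: (ltngtP k n) => [||->]; rewrite ?mul0r ?addr0 // mul1r add0r.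
Qed.

Section Correlation.
Variable R : comPzRingType.
Implicit Types (K l : nat) (a c w : nat -> R).

Definition supported K c := forall j, (K <= j)%N -> c j = 0.

Definition corr K a c l := \sum_(0 <= t < K) a t * c (t + l)%N.

Definition pairing K w c := corr K w c 0.

Definition shiftr a j := if j is j'.+1 then a j' else 0.

Definition mulXsub (z : R) a j := shiftr a j - z * a j.

Definition shift_sub (z : R) c j := c j.+1 - z * c j.

Lemma pairingE K w c : pairing K w c = \sum_(0 <= t < K) w t * c t.
Proof. by apply: eq_bigr => t _; rewrite addn0. Qed.

Lemma corr_linear K (x : R) a b c l :
  corr K (fun t => a t - x * b t) c l = corr K a c l - x * corr K b c l.
Proof.
by rewrite /corr mulr_sumr -sumrB; apply: eq_bigr => t _; rewrite mulrBl mulrA.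
Qed.

Lemma corr_shiftr K a c l : supported K c ->
  corr K (shiftr a) c l = corr K a c l.+1.
Proof.
case: K => [|K] cK; first by rewrite /corr !big_geq.
rewrite /corr big_nat_recl // big_nat_recr //= (cK (K + l.+1)%N) ?addnS ?ltnS ?leq_addr //.
rewrite mul0r add0r mulr0 addr0.
by apply: eq_bigr => t _; rewrite addSn addnS.
Qed.

Lemma corr_shift_sub K (z : R) a c l :
  corr K a (shift_sub z c) l = corr K a c l.+1 - z * corr K a c l.
Proof.
rewrite /corr mulr_sumr -sumrB; apply: eq_bigr => t _.
by rewrite /shift_sub addnS mulrBr mulrCA.
Qed.

Lemma corr_mulXsub K (z : R) a c l : supported K c ->
  corr K (mulXsub z a) c l = corr K a (shift_sub z c) l.
Proof. by move=> cK; rewrite corr_linear corr_shiftr // corr_shift_sub. Qed.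

Definition coord k (j : nat) : R := (j == k)%:R.

Lemma pairing_coord K k c : (k < K)%N -> pairing K (coord k) c = c k.
Proof. by move=> ltkK; rewrite pairingE sum_nat_delta ltkK. Qed.

Lemma pairingD K w1 w2 c : pairing K (w1 \+ w2) c = pairing K w1 c + pairing K w2 c.
Proof. by rewrite !pairingE -big_split; apply: eq_bigr => t _; rewrite mulrDl. Qed.

Lemma pairingB K w1 w2 c : pairing K (w1 \- w2) c = pairing K w1 c - pairing K w2 c.
Proof. by rewrite !pairingE -sumrB; apply: eq_bigr => t _; rewrite mulrBl. Qed.

Lemma coords_eq0 K m c : supported K c ->
  all (fun k => pairing K (coord k) c == 0) (iota m (K - m)) ->
  forall i, (m <= i)%N -> c i = 0.
Proof.
move=> cK /allP kc i mi; have [iK | /cK //] := ltnP i K.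
by rewrite -(pairing_coord c iK); apply/eqP/kc; rewrite mem_iota; lia.
Qed.

Lemma supported_shift_sub K (z : R) c : supported K c -> supported K (shift_sub z c).
Proof. by move=> cK j hj; rewrite /shift_sub !cK ?mulr0 ?subr0 // ltnW. Qed.

End Correlation.

Arguments coord {R} k j.

Lemma exists_common_zero (F : fieldType) K (G : seq (nat -> F)) : (size G < K)%N ->
  exists c, [/\ supported K c, exists j, c j != 0 & all (fun g => pairing K g c == 0) G].
Proof.
case: K => [|K] // ltGK.
pose M : 'M[F]_(K.+1, size G) := \matrix_(j, i) nth (fun _ => 0) G i j.
have /rowV0Pn [v /sub_kermxP vM v_neq0] : kermx M != 0.
  by rewrite kermx_eq0 /row_free; have := rank_leq_col M; lia.
have [j vj] : exists j, v 0 j != 0.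
  case: (pickP (fun j => v 0 j != 0)) => [j vj | v0]; first by exists j.
  by case/eqP: v_neq0; apply/matrixP => i j; rewrite ord1 mxE; apply/eqP/negbFE/v0.
exists (fun j => if (j < K.+1)%N then v 0 (inord j) else 0); split.
- by move=> i hi; rewrite ltnNge hi.
- by exists j; rewrite ltn_ord inord_val.
apply/(all_nthP (fun _ => 0)) => k ltkG.
have := congr1 (fun A : 'M_(1, size G) => A 0 (Ordinal ltkG)) vM.
rewrite /= !mxE => vM0; apply/eqP; rewrite -[RHS]vM0 pairingE big_mkord.
by apply: eq_bigr => i _; rewrite ltn_ord inord_val mxE mulrC.
Qed.

Lemma sum_weighted_sq_le0 (R : numDomainType) (A : Type) (L : seq A) (w f : A -> R) :
  all (fun x => (f x == 0) || (w x <= 0)) L -> \sum_(x <- L) w x * `|f x| ^+ 2 <= 0.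
Proof.
elim: L => [|x L IH]; first by rewrite big_nil.
rewrite big_cons /= => /andP [/orP fxw /IH sumL].
suff term : w x * `|f x| ^+ 2 <= 0 by rewrite -[leRHS](addr0 0) lerD.
case: fxw => [/eqP -> | wx]; first by rewrite normr0 expr0n mulr0.
by rewrite mulr_le0_ge0 ?exprn_ge0.
Qed.

Lemma sum_weighted_sq_ge0 (R : numDomainType) (A : Type) (L : seq A) (w f : A -> R) :
  all (fun x => (f x == 0) || (0 <= w x)) L -> 0 <= \sum_(x <- L) w x * `|f x| ^+ 2.
Proof.
move=> fw; rewrite -oppr_le0 -sumrN.
under eq_bigr do rewrite -mulNr.
by apply: sum_weighted_sq_le0; apply: sub_all fw => x; rewrite oppr_le0.
Qed.

Fixpoint prod_coef (s : seq algC) : nat -> algC :=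
  if s is z :: s' then mulXsub z (prod_coef s') else fun k => (k == 0)%:R.

(* recip_coef s lists the coefficients of \prod_(z <- s) (1 - z^* X), the
   conjugate reciprocal of \prod_(z <- s) (X - z) (see recip_coefE). *)
Fixpoint recip_coef (s : seq algC) : nat -> algC :=
  if s is z :: s' then fun k => recip_coef s' k - z^* * shiftr (recip_coef s') k
  else fun k => (k == 0)%:R.

Definition schur_cohn K s c := \sum_(0 <= l < K)
  (`|corr K (prod_coef s) c l| ^+ 2 - `|corr K (recip_coef s) c l| ^+ 2).

Fixpoint schur_cohn_forms (s : seq algC) : seq (algC * (nat -> algC)) :=
  if s is z :: s' then
    (z, recip_coef s') :: [seq (x.1, mulXsub z x.2) | x <- schur_cohn_forms s']
  else [::].

Lemma map_fst_schur_cohn_forms s : map fst (schur_cohn_forms s) = s.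
Proof. by elim: s => //= z s IH; rewrite -map_comp IH. Qed.

Lemma normB_mul_conj (a b z : algC) :
  `|a - z * b| ^+ 2 - `|b - z^* * a| ^+ 2 = (1 - `|z| ^+ 2) * (`|a| ^+ 2 - `|b| ^+ 2).
Proof. by rewrite !normCK !rmorphB !rmorphM /= conjCK; ring. Qed.

Lemma schur_cohn_cons K z s c : supported K c ->
  schur_cohn K (z :: s) c =
  schur_cohn K s (shift_sub z c) + (`|z| ^+ 2 - 1) * `|pairing K (recip_coef s) c| ^+ 2.
Proof.
move=> cK; set u := corr K (recip_coef s) c.
have uK : u K = 0 by rewrite /u /corr big1 // => t _; rewrite cK ?mulr0 ?leq_addl.
have term l :
    `|corr K (prod_coef (z :: s)) c l| ^+ 2 - `|corr K (recip_coef (z :: s)) c l| ^+ 2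
    = (`|corr K (prod_coef s) (shift_sub z c) l| ^+ 2
       - `|corr K (recip_coef s) (shift_sub z c) l| ^+ 2)
      + (`|z| ^+ 2 - 1) * (`|u l| ^+ 2 - `|u l.+1| ^+ 2).
  rewrite corr_mulXsub // corr_linear corr_shiftr // (corr_shift_sub _ _ (recip_coef s)) -/u.
  have := normB_mul_conj (u l.+1) (u l) z.
  set A := `|_ - z * _| ^+ 2; set B := `|_ - z^* * _| ^+ 2 => AB.
  have -> : (`|z| ^+ 2 - 1) * (`|u l| ^+ 2 - `|u l.+1| ^+ 2) = A - B by rewrite AB; ring.
  by rewrite addrA subrK.
have telescope : \sum_(0 <= l < K) (`|u l| ^+ 2 - `|u l.+1| ^+ 2) = `|u 0%N| ^+ 2.
  rewrite (telescope_sumr_eq (fun l => - `|u l| ^+ 2)) // => [|l _].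
    by rewrite uK normr0 expr0n oppr0 sub0r opprK.
  by rewrite opprK addrC.
rewrite /schur_cohn (eq_bigr _ (fun l _ => term l)) big_split /= -mulr_sumr.
by rewrite telescope.
Qed.

Lemma schur_cohn_diag K s c : supported K c ->
  schur_cohn K s c =
  \sum_(x <- schur_cohn_forms s) (`|x.1| ^+ 2 - 1) * `|pairing K x.2 c| ^+ 2.
Proof.
elim: s c => [|z s IH] c cK.
  by rewrite big_nil /schur_cohn big1 // => l _; rewrite subrr.
rewrite schur_cohn_cons // IH; last exact: supported_shift_sub.
rewrite /= big_cons big_map addrC.
by congr (_ + _); apply: eq_bigr => x _; rewrite /pairing corr_mulXsub.
Qed.

Definition outside_disk (z : algC) : bool := 1 < `|z|.

Lemma count_roots_ge K s (F : seq (nat -> algC)) (P : pred algC) :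
  (forall c, supported K c -> (exists j, c j != 0) ->
     all (fun g => pairing K g c == 0) F ->
     all (fun x => P x.1 ==> (pairing K x.2 c == 0)) (schur_cohn_forms s) -> False) ->
  (K <= size F + count P s)%N.
Proof.
move=> no_common_zero; rewrite leqNgt; apply/negP => ltK.
pose G := F ++ [seq x.2 | x <- schur_cohn_forms s & P x.1].
have [|c [cK c_neq0]] := @exists_common_zero _ K G.
  move: ltK; rewrite -[X in count _ X]map_fst_schur_cohn_forms count_map.
  by rewrite size_cat size_map size_filter.
rewrite all_cat all_map => /andP [kF kS].
by apply: (no_common_zero c cK c_neq0 kF); rewrite -all_filter.
Qed.

Lemma count_outside_ge K s (F : seq (nat -> algC)) :
  (forall c, supported K c -> (exists j, c j != 0) ->
     all (fun g => pairing K g c == 0) F -> 0 < schur_cohn K s c) ->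
  (K <= size F + count outside_disk s)%N.
Proof.
move=> pos; apply: count_roots_ge => c cK c_neq0 kF kS.
have := pos c cK c_neq0 kF; rewrite schur_cohn_diag // lt_leAnge sum_weighted_sq_le0 ?andbF //.
apply: sub_all kS => x /implyP kx; rewrite subr_le0.
have [/kx -> // | z_le1] := boolP (outside_disk x.1).
by rewrite exprn_ile1 ?orbT // real_leNgt ?num_real.
Qed.

Lemma count_inside_ge K s (F : seq (nat -> algC)) :
  (forall c, supported K c -> (exists j, c j != 0) ->
     all (fun g => pairing K g c == 0) F -> schur_cohn K s c < 0) ->
  (K <= size F + count (predC outside_disk) s)%N.
Proof.
move=> neg; apply: count_roots_ge => c cK c_neq0 kF kS.
have := neg c cK c_neq0 kF; rewrite schur_cohn_diag // lt_leAnge sum_weighted_sq_ge0 ?andbF //.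
apply: sub_all kS => x /implyP kx; rewrite subr_ge0.
have [z_gt1 | /kx -> //] := boolP (outside_disk x.1).
by rewrite exprn_ege1 ?orbT // ltW.
Qed.

Lemma prod_coefE s k : prod_coef s k = (\prod_(z <- s) ('X - z%:P))`_k.
Proof.
elim: s k => [|z s IH] k; first by rewrite big_nil coef1.
by rewrite big_cons mulrBl coefB coefXM coefCM -!IH; case: k.
Qed.

Lemma prod_coef_gt_size s k : (size s < k)%N -> prod_coef s k = 0.
Proof. by move=> ltsk; rewrite prod_coefE nth_default // size_prod_XsubC. Qed.

Lemma recip_coefE s k :
  recip_coef s k = if (k <= size s)%N then (prod_coef s (size s - k))^* else 0.
Proof.
elim: s k => [|z s IH] [|k] /=; rewrite ?conjC1 //.
  by rewrite IH !subn0 leq0n /mulXsub /= (@prod_coef_gt_size s (size s).+1) // !mulr0 !subr0.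
rewrite !IH ltnS; case: (ltngtP k (size s)) => [lt_ks | gt_ks | ->].
- by rewrite subSS -(subnSK lt_ks) /mulXsub /= rmorphB rmorphM.
- by rewrite mulr0 subr0.
- by rewrite !subnn /mulXsub /= !sub0r rmorphN rmorphM.
Qed.

Lemma prod_rootsC p : p \is monic -> \prod_(z <- rootsC p) ('X - z%:P) = p.
Proof.
move=> /monicP lead1; have := svalP (closed_field_poly_normal p).
by rewrite -/(rootsC p) lead1 scale1r => {2}->.
Qed.

Lemma size_rootsC p : p \is monic -> size (rootsC p) = (size p).-1.
Proof. by move=> /prod_rootsC {2}<-; rewrite size_prod_XsubC. Qed.

Lemma pd_monic d : (2 <= d)%N -> pd d \is monic /\ size (pd d) = d.+1.
Proof.
move=> d2.
have lt_tail : (size (- 'X^(d.-1) - 1 : {poly algC})%R < size ('X^d : {poly algC}))%N.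
  rewrite size_polyXn (leq_ltn_trans (size_polyD _ _)) // size_polyN size_polyN.
  by rewrite size_polyXn size_poly1; lia.
rewrite /pd -addrA; split; first by rewrite monicE lead_coefDl // lead_coefXn.
by rewrite size_polyDl // size_polyXn.
Qed.

Lemma coef_pd d t : (pd d)`_t = (t == d)%:R - (t == d.-1)%:R - (t == 0)%:R.
Proof. by rewrite !coefB !coefXn coef1. Qed.

Lemma prod_coef_pd d t : (2 <= d)%N -> prod_coef (rootsC (pd d)) t = (pd d)`_t.
Proof. by case/pd_monic=> monic_pd _; rewrite prod_coefE prod_rootsC. Qed.

Lemma recip_coef_pd d t : (2 <= d)%N -> (t < d)%N ->
  recip_coef (rootsC (pd d)) t = (t == 0)%:R - (t == 1)%:R.
Proof.
move=> d2 ltd; have [monic_pd size_pd] := pd_monic d2.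
rewrite recip_coefE size_rootsC // size_pd /= ltnW // prod_coef_pd // coef_pd.
have -> : ((d - t)%N == d) = (t == 0%N) by apply/eqP/eqP; lia.
have -> : ((d - t)%N == d.-1) = (t == 1%N) by apply/eqP/eqP; lia.
have -> : ((d - t)%N == 0%N) = false by apply/eqP; lia.
by rewrite subr0 rmorphB !rmorph_nat.
Qed.

Definition gap_sum n (c : nat -> algC) :=
  \sum_(0 <= l < n) (`|c l| ^+ 2 - `|c l - c l.+1| ^+ 2).

Lemma schur_cohn_pd d c : (2 <= d)%N -> supported d c ->
  schur_cohn d (rootsC (pd d)) c = `|c 0%N + c d.-1| ^+ 2 - `|c 0%N| ^+ 2 + gap_sum d c.
Proof.
move=> d2 cd; set s := rootsC (pd d).
have prod_corr l : corr d (prod_coef s) c l = - (c (d.-1 + l)%N + c l).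
  rewrite /corr; under eq_bigr do rewrite prod_coef_pd // coef_pd !mulrBl.
  by rewrite !sumrB !sum_nat_delta ltnn ifT ?ifT ?sub0r ?opprD //; lia.
have recip_corr l : corr d (recip_coef s) c l = c l - c l.+1.
  rewrite /corr (eq_big_nat _ _ (F2 := fun t =>
    (t == 0%N)%:R * c (t + l)%N - (t == 1%N)%:R * c (t + l)%N)) => [|t /andP [_ ltd]].
    by rewrite sumrB !sum_nat_delta ifT ?ifT //; lia.
  by rewrite recip_coef_pd // mulrBl.
rewrite /schur_cohn (eq_bigr (fun l => `|c (d.-1 + l)%N + c l| ^+ 2 - `|c l - c l.+1| ^+ 2))
  => [|l _]; last by rewrite prod_corr recip_corr normrN.
rewrite /gap_sum; case: d d2 cd {prod_corr recip_corr s} => // d _ cd.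
rewrite !big_nat_recl //= addn0.
have tail0 l : c (d + l.+1)%N = 0 by rewrite cd // addnS ltnS leq_addr.
under eq_bigr do rewrite tail0 add0r.
by rewrite [c d + _]addrC; ring.
Qed.

Lemma gap_sumS n c :
  gap_sum n.+1 c = gap_sum n c + (`|c n| ^+ 2 - `|c n - c n.+1| ^+ 2).
Proof. exact: big_nat_recr. Qed.

Lemma gap_sum_tail m n c : (m <= n)%N -> (forall i, (m <= i <= n)%N -> c i = 0) ->
  gap_sum n c = gap_sum m c.
Proof.
move=> mn cz; rewrite /gap_sum (big_cat_nat (leq0n m) mn) /=.
rewrite [X in _ + X]big1_seq ?addr0 // => l; rewrite mem_index_iota => /andP [_ /andP [ml ln]].
by rewrite !cz ?subrr ?normr0 ?expr0n ?subrr //; lia.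
Qed.

Definition block_form b (c : nat -> algC) :=
  `|c b.+1 + c b.+3| ^+ 2 - `|c b - c b.+1| ^+ 2 - `|c b.+1 - c b.+2 + c b.+3| ^+ 2.

Lemma gap_sum_block b c :
  gap_sum b.+3 c = gap_sum b c + block_form b c + `|c b| ^+ 2 - `|c b.+3| ^+ 2.
Proof. by rewrite /gap_sum !big_nat_recr //= /block_form !normCK !rmorphB !rmorphD; ring. Qed.

Lemma gap_sum_blocks J c : c 0%N = 0 ->
  gap_sum (3 * J).+1 c = \sum_(0 <= j < J) block_form (3 * j).+1 c - `|c (3 * J).+1| ^+ 2.
Proof.
move=> c0; elim: J => [|J IH].
  by rewrite /gap_sum big_nat1 big_geq // c0 muln0 normr0 expr0n !sub0r normrN.
have -> : (3 * J.+1).+1 = (3 * J).+4 by rewrite mulnS.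
by rewrite gap_sum_block IH big_nat_recr //=; ring.
Qed.

Lemma block_kernel J (c : nat -> algC) :
  c 0%N = 0 -> (forall i, ((3 * J).+1 <= i)%N -> c i = 0) ->
  (forall j, (j < J)%N -> let b := (3 * j).+1 in
     [/\ c b.+1 + c b.+3 = 0, c b - c b.+1 = 0 & c b.+1 - c b.+2 + c b.+3 = 0]) ->
  forall i, c i = 0.
Proof.
move=> c0 ctail cb.
suff high m i : ((3 * (J - m)).+1 <= i)%N -> c i = 0.
  by case=> [//|i]; apply: (high J); rewrite subnn.
elim: m i => [|m IH] i; first by rewrite subn0; apply: ctail.
have [leJm | ltmJ] := leqP J m; first by move=> hi; apply: IH; lia.
set j := (J - m.+1)%N; have [h1 h2 h3] := cb j ltac:(lia).
have c4 : c (3 * j).+4 = 0 by apply: IH; lia.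
have c2 : c (3 * j).+2 = 0 by move: h1; rewrite c4 addr0.
have c1 : c (3 * j).+1 = 0 by move: h2; rewrite c2 subr0.
have c3 : c (3 * j).+3 = 0 by move/eqP: h3; rewrite c2 c4 sub0r addr0 oppr_eq0 => /eqP.
move=> hi; have : i = (3 * j).+1 \/ i = (3 * j).+2 \/ i = (3 * j).+3 \/
  ((3 * (J - m)).+1 <= i)%N by lia.
by case=> [->|[->|[->|/IH]]].
Qed.

Lemma schur_cohn_pd_blocks d J c : ((3 * J).+2 <= d)%N -> supported d c ->
  c 0%N = 0 -> (forall i, ((3 * J).+1 <= i)%N -> c i = 0) ->
  schur_cohn d (rootsC (pd d)) c = \sum_(0 <= j < J) block_form (3 * j).+1 c.
Proof.
move=> Jd cd c0 ctail.
rewrite schur_cohn_pd ?(leq_trans _ Jd) // c0 (ctail d.-1); last lia.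
rewrite add0r normr0 expr0n subrr add0r.
have -> : gap_sum d c = gap_sum (3 * J).+1 c.
  by apply: gap_sum_tail => [|i /andP [/ctail //]]; lia.
by rewrite gap_sum_blocks // ctail // normr0 expr0n subr0.
Qed.

Lemma n_outE d : n_out d = count outside_disk (rootsC (pd d)).
Proof. by []. Qed.

Lemma all_iota0 (P : pred nat) J : all P (iota 0 J) -> forall j, (j < J)%N -> P j.
Proof. by move=> /allP PJ j ltjJ; apply: PJ; rewrite mem_iota. Qed.

Lemma n_out_ge_third d : (2 <= d)%N -> ((d - 2) %/ 3 <= n_out d)%N.
Proof.
move=> d2; set J := ((d - 2) %/ 3)%N; have Jd : ((3 * J).+2 <= d)%N by lia.
pose F : seq (nat -> algC) := coord 0 :: [seq coord k | k <- iota (3 * J).+1 (d - (3 * J).+1)]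
  ++ [seq coord (3 * j).+1 \- coord (3 * j).+2 | j <- iota 0 J]
  ++ [seq coord (3 * j).+2 \- coord (3 * j).+3 \+ coord (3 * j).+4 | j <- iota 0 J].
suff : (d <= size F + n_out d)%N by rewrite /F /= !size_cat !size_map !size_iota; lia.
apply: count_outside_ge => c cd c_neq0; rewrite /= !all_cat !all_map.
case/and4P => /eqP c0 /(coords_eq0 cd) ctail /all_iota0 neg1 /all_iota0 neg2.
rewrite pairing_coord in c0; last lia.
have negs j : (j < J)%N ->
    c (3 * j).+1 - c (3 * j).+2 = 0 /\ c (3 * j).+2 - c (3 * j).+3 + c (3 * j).+4 = 0.
  move=> ltjJ; move: (neg1 j ltjJ) (neg2 j ltjJ) => /=.
  by rewrite !(pairingD, pairingB, pairing_coord) => [/eqP -> /eqP -> //|||||]; lia.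
rewrite (schur_cohn_pd_blocks Jd cd c0 ctail).
rewrite (eq_big_nat _ _ (F2 := fun j => `|c (3 * j).+2 + c (3 * j).+4| ^+ 2))
  => [|j /andP [_ ltjJ]]; last first.
  by have [n1 n2] := negs j ltjJ; rewrite /block_form n1 n2 normr0 expr0n !subr0.
rewrite lt0r sumr_ge0 ?andbT => [|j _]; last exact: exprn_ge0.
rewrite psumr_eq0 => [|j _]; last exact: exprn_ge0.
apply/negP => /allP pos0; case: c_neq0 => i.
rewrite (block_kernel c0 ctail) ?eqxx // => j ltjJ.
have := pos0 j; rewrite mem_index_iota ltjJ sqrf_eq0 normr_eq0.
by move=> /(_ isT) /eqP pos_j; have [n1 n2] := negs j ltjJ.
Qed.

Lemma n_out_le_third d : (2 <= d)%N -> (n_out d <= d - 2 * ((d - 2) %/ 3))%N.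
Proof.
move=> d2; set J := ((d - 2) %/ 3)%N; have Jd : ((3 * J).+2 <= d)%N by lia.
pose F : seq (nat -> algC) := coord 0 :: [seq coord k | k <- iota (3 * J).+1 (d - (3 * J).+1)]
  ++ [seq coord (3 * j).+2 \+ coord (3 * j).+4 | j <- iota 0 J].
have [monic_pd size_pd] := pd_monic d2.
have := count_predC outside_disk (rootsC (pd d)); rewrite size_rootsC // size_pd -n_outE.
suff : (d <= size F + count (predC outside_disk) (rootsC (pd d)))%N.
  by rewrite /F /= !size_cat !size_map !size_iota; lia.
apply: count_inside_ge => c cd c_neq0; rewrite /= !all_cat !all_map.
case/and3P => /eqP c0 /(coords_eq0 cd) ctail /all_iota0 pos.
rewrite pairing_coord in c0; last lia.
have pos0 j : (j < J)%N -> c (3 * j).+2 + c (3 * j).+4 = 0.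
  move=> ltjJ; move: (pos j ltjJ) => /=.
  by rewrite !(pairingD, pairing_coord) => [/eqP //||]; lia.
pose negs j :=
  `|c (3 * j).+1 - c (3 * j).+2| ^+ 2 + `|c (3 * j).+2 - c (3 * j).+3 + c (3 * j).+4| ^+ 2.
have negs_ge0 j : 0 <= negs j by rewrite addr_ge0 ?exprn_ge0.
rewrite (schur_cohn_pd_blocks Jd cd c0 ctail).
rewrite (eq_big_nat _ _ (F2 := fun j => - negs j)) => [|j /andP [_ ltjJ]]; last first.
  by rewrite /block_form pos0 // normr0 expr0n sub0r opprD.
rewrite sumrN oppr_lt0 lt0r sumr_ge0 ?andbT // psumr_eq0 //.
apply/negP => /allP negs0; case: c_neq0 => i.
rewrite (block_kernel c0 ctail) ?eqxx // => j ltjJ.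
have := negs0 j; rewrite mem_index_iota ltjJ paddr_eq0 ?exprn_ge0 // !sqrf_eq0 !normr_eq0.
by move=> /(_ isT) /andP [/eqP n1 /eqP n2]; split; first exact: pos0.
Qed.

Lemma n_out_ge2 d : (6 <= d)%N -> (2 <= n_out d)%N.
Proof.
case: d => [|[|n]] // n4.
(* The constraints leave c = (y, x, x, x, 0, ..., 0, y), on which the form is
   |x + y|^2 + |y|^2. *)
pose F : seq (nat -> algC) := [seq coord k | k <- iota 4 (n - 3)]
  ++ [:: coord 1 \- coord 2; coord 2 \- coord 3; coord 0 \- coord n.+1].
suff : (n.+2 <= size F + n_out n.+2)%N by rewrite size_cat size_map size_iota /=; lia.
apply: count_outside_ge => c cd c_neq0; rewrite all_cat all_map /= andbT.
case/and4P => /allP mid /eqP c12 /eqP c23 /eqP c0n.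
rewrite !(pairingB, pairing_coord) in c12 c23 c0n; try lia.
have cmid k : (4 <= k <= n)%N -> c k = 0.
  move=> k4n; rewrite -(@pairing_coord _ n.+2 k c); last lia.
  by apply/eqP/mid; rewrite mem_iota; lia.
set x := c 1%N in c12; set y := c 0%N in c0n.
have c2 : c 2%N = x by apply/esym/subr0_eq.
have c3 : c 3%N = x by rewrite -c2; apply/esym/subr0_eq.
have cn : c n.+1 = y by apply/esym/subr0_eq.
have form : schur_cohn n.+2 (rootsC (pd n.+2)) c = `|x + y| ^+ 2 + `|y| ^+ 2.
  rewrite schur_cohn_pd // 2!gap_sumS (@gap_sum_tail 4) // 4!gap_sumS /gap_sum big_geq //.
  rewrite c2 c3 cn (cmid 4%N) ?(cmid n) ?(cd n.+2) -/x -/y; try lia.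
  by rewrite !normCK !(rmorphB, rmorphD, rmorph0) /=; ring.
rewrite form lt0r addr_ge0 ?exprn_ge0 // andbT paddr_eq0 ?exprn_ge0 //.
rewrite !sqrf_eq0 !normr_eq0; apply/negP => /andP [/eqP xy0 /eqP y0].
rewrite y0 addr0 in xy0; case: c_neq0 => i; apply/negP; rewrite negbK.
have : i \in [:: 0; 1; 2; 3; n.+1]%N \/ (4 <= i <= n \/ n.+2 <= i)%N.
  by rewrite !inE; lia.
case=> [|[/cmid -> // | /cd -> //]].
by rewrite !inE => /or4P [| | |/orP []] /eqP ->; rewrite ?c2 ?c3 ?cn -/x -/y ?xy0 ?y0.
Qed.

Lemma ratio_near_third (R : realFieldType) (n d : nat) (eps : R) :
  0 < eps -> 3 < eps * d%:R -> (3 * n <= d + 8)%N -> (d <= 3 * n + 4)%N ->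
  `|n%:R / d%:R - 3%:R^-1| < eps.
Proof.
move=> eps_gt0 d_big up lo.
have d_gt0 : 0 < d%:R :> R.
  by rewrite ltr0n lt0n; apply: contraTneq d_big => ->; rewrite mulr0 -leNgt ler0n.
have up' : 3 * n%:R <= d%:R + 8 :> R by rewrite -natrM -natrD ler_nat.
have lo' : d%:R <= 3 * n%:R + 4 :> R by rewrite -natrM -natrD ler_nat.
have -> : n%:R / d%:R - 3%:R^-1 = (3 * n%:R - d%:R) / (3 * d%:R) :> R.
  by field; rewrite gt_eqF.
by rewrite ltr_norml ltr_pdivrMr ?ltr_pdivlMr ?mulr_gt0 //; apply/andP; split; lra.
Qed.

Theorem mainTheorem14 :
  (forall d : nat, (6 <= d)%N -> (2 <= n_out d)%N) /\
  (forall eps : rat, 0 < eps ->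
     exists N : nat, forall d : nat, (N <= d)%N ->
       `| (n_out d)%:R / d%:R - 3%:R^-1 | < eps).
Proof.
split; first exact: n_out_ge2.
move=> eps eps_gt0; pose N := Num.Def.archi_bound (3 / eps).
have N_big : 3 / eps < N%:R by apply: archi_boundP; rewrite divr_ge0 // ltW.
exists (maxn 2 N) => d; rewrite geq_max => /andP [d2 Nd].
have lo := n_out_ge_third d2; have up := n_out_le_third d2.
apply: ratio_near_third => //; try lia.
have : 3 / eps < d%:R by apply: (lt_le_trans N_big); rewrite ler_nat.
by rewrite ltr_pdivrMr // mulrC.
Qed.
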